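(* Let $G=\langle x\rangle$ be a finite cyclic group with $o(x)\geq 2$, and let $m\geq 3$ be an integer. Then $G$ admits an $m$-PDR of valency $3$ if and only if it is not the case that $o(x)=2$ and $m=3$.
   Context: For a group $G$ and an integer $m\geq 2$, write $g_i$ for the element $(g,i)$ of $G\times\mathbb{Z}_m$. Given subsets $T_{i,j}\subseteq G$ for $i,j\in\mathbb{Z}_m$, the $m$-Cayley digraph $\mathrm{Cay}(G,T_{i,j}:i,j\in\mathbb{Z}_m)$ is the digraph with vertex set $G\times\mathbb{Z}_m$ and arc set $\bigcup_{i,j\in\mathbb{Z}_m}\{(g_i,(tg)_j): t\in T_{i,j},\, g\in G\}$. It is called an $m$-partite Cayley digraph if $T_{i,i}=\emptyset$ for all $i\in\mathbb{Z}_m$. A digraph is regular of valency $k$ if every vertex has out-valency $k$ and in-valency $k$. A group $G$ admits an $m$-PDR of valency $k$ if there exists an $m$-partite Cayley digraph $\Gamma$ over $G$ which is regular of valency $k$ and whose full automorphism group $\mathrm{Aut}(\Gamma)$ is isomorphic to $G$. $o(x)$ denotes the order of $x$. *)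

From HB Require Import structures.
From mathcomp Require Import all_boot all_fingroup all_solvable.
Set Implicit Arguments. Unset Strict Implicit. Unset Printing Implicit Defensive.
Local Open Scope group_scope.

(* m-Cayley digraph Cay(G, T_{i,j}) on vertex set G x Z_m (Z_m = 'I_m):
   arc (g_i, h_j) iff h = t g for some t in T_{i,j}, i.e. h * g^-1 \in T i j. *)
Definition mcay_arc (gT : finGroupType) (m : nat)
  (T : 'I_m -> 'I_m -> {set gT}) (u v : gT * 'I_m) : bool :=
  v.1 * (u.1)^-1 \in T u.2 v.2.

Definition mpartite (gT : finGroupType) (m : nat)
  (T : 'I_m -> 'I_m -> {set gT}) : Prop := forall i, T i i = set0.

Definition dig_regular (V : finType) (arc : rel V) (k : nat) : Prop :=
  forall u : V, #|[set v | arc u v]| = k /\ #|[set v | arc v u]| = k.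

Definition dig_aut (V : finType) (arc : rel V) : {set {perm V}} :=
  [set p : {perm V} | [forall u, forall v, arc (p u) (p v) == arc u v]].

Definition admits_mPDR (gT : finGroupType) (m k : nat) : Prop :=
  exists T : 'I_m -> 'I_m -> {set gT},
    [/\ mpartite T, dig_regular (mcay_arc T) k &
        dig_aut (mcay_arc T) \isog [set: gT]].

From HB Require Import structures.
From mathcomp Require Import all_boot all_fingroup all_solvable.
From mathcomp Require Import zify.
Set Implicit Arguments. Unset Strict Implicit. Unset Printing Implicit Defensive.

(* Write G = <[x]>, n = #[x], and g_i for (g, i).  In the construction every
   T_{i,j} is a subset of {1, x}: x^k lies in T_{i,j} iff [pdr_exp m i j k].
   Its digons are exactly the rungs g_i -- g_{i+1}, so the digon graph is a
   disjoint union of the paths g_0 -- ... -- g_{m-1}.  Among their endpoints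
   only those in layer 0 carry a chord (g_0 -> g_2), so an automorphism fixes
   layer 0 and then every layer, acting by g_i |-> (f g)_i; the arc
   g_{m-1} -> (x g)_1 forces f (x g) = x f g, i.e. the automorphism is a right
   translation.  The condition n > 2 for m = 3 prevents the arcs
   g_0 -> (x g)_2 -> (x^2 g)_0 from closing into a digon.
   Conversely, for |G| = 2 and m = 3 regularity forces |T_{i,j}| = 1 along a
   3-cycle s of layers and T_{s i, i} = G; multiplying layer i on the left by
   the element of T_{i, s i} turns the rotation of layers along s into an
   automorphism which is not a translation, so Aut is bigger than G. *)

Section DigraphAutomorphisms.
Variables (V : finType) (arc : rel V).

Lemma dig_aut_group_set : group_set (dig_aut arc).
Proof.
apply/group_setP; split=> [|p q].
  by rewrite inE; apply/forallP=> u; apply/forallP=> v; rewrite !perm1.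
rewrite !inE => /'forall_forallP/= p_aut /'forall_forallP/= q_aut.
by apply/'forall_forallP=> u v; rewrite !permM (eqP (q_aut _ _)).
Qed.

Canonical dig_aut_group := group dig_aut_group_set.

Lemma dig_autP p : p \in dig_aut arc -> forall u v, arc (p u) (p v) = arc u v.
Proof. by rewrite inE => /'forall_forallP/= p_aut u v; apply/eqP. Qed.

Definition digon u v := arc u v && arc v u.

Definition digon_leaf u := forall v w, digon u v -> digon u w -> v = w.

Definition digon_chord u :=
  exists w v, [/\ digon u w, digon w v, v != u & arc u v].

Lemma dig_aut_digon p : p \in dig_aut arc -> forall u v, digon (p u) (p v) = digon u v.
Proof. by move=> p_aut u v; rewrite /digon !(dig_autP p_aut). Qed.

Lemma dig_aut_leaf p u : p \in dig_aut arc -> digon_leaf u -> digon_leaf (p u).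
Proof.
move=> p_aut leaf_u v w; rewrite -[v](permKV p) -[w](permKV p) !(dig_aut_digon p_aut).
by move=> /leaf_u uw /uw ->.
Qed.

Lemma dig_aut_chord p u : p \in dig_aut arc -> digon_chord u -> digon_chord (p u).
Proof.
move=> p_aut [w [v [uw wv vu uv]]]; exists (p w), (p v).
by rewrite !(dig_aut_digon p_aut) (dig_autP p_aut) (inj_eq perm_inj).
Qed.

End DigraphAutomorphisms.

Lemma card_dep_pairs (I aT : finType) (A : I -> {set aT}) :
  #|[set p : I * aT | p.2 \in A p.1]| = \sum_i #|A i|.
Proof.
rewrite -sum1_card; under [RHS]eq_bigr do rewrite -sum1_card.
by rewrite pair_big_dep /=; apply: eq_bigl => p; rewrite inE.
Qed.

Section MCayleyDigraph.
Local Open Scope group_scope.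
Variables (gT : finGroupType) (m : nat) (T : 'I_m -> 'I_m -> {set gT}).
Local Notation arc := (mcay_arc T).

Lemma card_mcay_out g i : #|[set v | arc (g, i) v]| = \sum_j #|T i j|.
Proof.
rewrite -card_dep_pairs -(on_card_preimset (f := fun v => (v.2, v.1 * g^-1))).
  by apply: eq_card => v; rewrite !inE.
apply: onW_bij; exists (fun p => (p.2 * g, p.1)) => [[h j]|[j t]] /=.
  by rewrite mulgKV.
by rewrite mulgK.
Qed.

Lemma card_mcay_in g j : #|[set v | arc v (g, j)]| = \sum_i #|T i j|.
Proof.
rewrite -(card_dep_pairs (fun i => T i j)).
rewrite -(on_card_preimset (f := fun v => (v.2, g * v.1^-1))).
  by apply: eq_card => v; rewrite !inE.
apply: onW_bij; exists (fun p => (p.2^-1 * g, p.1)) => [[h i]|[i t]] /=.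
  by rewrite invMg invgK mulgKV.
by rewrite invMg invgK mulgA mulgV mul1g.
Qed.

Lemma mcay_layer_perm_aut (s : {perm 'I_m}) (d : 'I_m -> gT) :
    (forall i j t, (t \in T i j) = (d j * t * (d i)^-1 \in T (s i) (s j))) ->
  exists2 p, p \in dig_aut arc & forall g i, p (g, i) = (d i * g, s i).
Proof.
move=> Tsd.
have p_inj : injective (fun v : gT * 'I_m => (d v.2 * v.1, s v.2)).
  by move=> [g i] [h j] [+ /perm_inj eq_ij]; rewrite -eq_ij => /mulgI ->.
exists (perm p_inj) => [|g i]; last by rewrite permE.
rewrite inE; apply/'forall_forallP=> -[g i] [h j]; rewrite !permE /mcay_arc /=.
by rewrite [h * g^-1 \in _]Tsd invMg !mulgA.
Qed.

Definition rtransl_fun (a : gT) (v : gT * 'I_m) := (v.1 * a, v.2).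

Lemma rtransl_fun_inj a : injective (rtransl_fun a).
Proof. by move=> [g i] [h j] [/mulIg -> ->]. Qed.

Definition rtransl a : {perm gT * 'I_m} := perm (@rtransl_fun_inj a).

Lemma rtranslE a g i : rtransl a (g, i) = (g * a, i).
Proof. by rewrite permE. Qed.

Lemma rtransl_inj : 0 < m -> injective rtransl.
Proof.
move=> m_gt0 a b /(congr1 (fun p : {perm _} => (p (1, Ordinal m_gt0)).1)).
by rewrite !rtranslE !mul1g.
Qed.

Lemma rtranslM : {morph rtransl : a b / a * b}.
Proof. by move=> a b; apply/permP=> -[g i]; rewrite permM !rtranslE mulgA. Qed.

Lemma rtransl_dig_aut a : rtransl a \in dig_aut arc.
Proof.
rewrite inE; apply/'forall_forallP=> -[g i] [h j].
by rewrite !rtranslE /mcay_arc /= invMg mulgA mulgK.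
Qed.

Lemma mcay_aut_isog : 0 < m ->
    (forall p, p \in dig_aut arc -> exists a, p = rtransl a) ->
  dig_aut arc \isog [set: gT].
Proof.
move=> m_gt0 aut_rtransl.
have rtranslM_in : {in [set: gT] &, {morph rtransl : a b / a * b}}.
  by move=> a b _ _; apply: rtranslM.
pose f := Morphism rtranslM_in.
have -> : dig_aut arc = f @* [set: gT].
  apply/eqP; rewrite eqEsubset; apply/andP; split; apply/subsetP=> p.
    by move=> /aut_rtransl [a ->]; apply: mem_morphim.
  by case/morphimP=> a _ _ ->; apply: rtransl_dig_aut.
rewrite isog_sym sub_isog //; apply/injmP=> a b _ _; exact: rtransl_inj.
Qed.

Lemma card_mcay_aut_gt p g i :
  p \in dig_aut arc -> (p (g, i)).2 != i -> #|gT| < #|dig_aut arc|.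
Proof.
move=> p_aut p_moves; have m_gt0 : 0 < m by apply: leq_ltn_trans (ltn_ord i).
set R := [set rtransl a | a : gT].
have p_notin_R : p \notin R.
  by apply/imsetP=> -[a _ p_a]; rewrite p_a rtranslE eqxx in p_moves.
have sub_aut : p |: R \subset dig_aut arc.
  apply/subsetP=> q; rewrite in_setU1 => /predU1P[-> // | /imsetP[a _ ->]].
  exact: rtransl_dig_aut.
have := subset_leq_card sub_aut.
by rewrite cardsU1 p_notin_R card_imset //; apply: rtransl_inj.
Qed.

End MCayleyDigraph.

Arguments rtransl {gT m} a.

Local Notation o0 := (@Ordinal 3 0 isT).
Local Notation o1 := (@Ordinal 3 1 isT).
Local Notation o2 := (@Ordinal 3 2 isT).

Section TwoElementsThreeLayers.
Local Open Scope group_scope.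

Lemma ord3P (i : 'I_3) : [\/ i = o0, i = o1 | i = o2].
Proof.
by case: i => -[|[|[|//]]] ?; [constructor 1 | constructor 2 | constructor 3]; apply: val_inj.
Qed.

Lemma big_ord3 (F : 'I_3 -> nat) : (\sum_j F j = F o0 + F o1 + F o2)%N.
Proof.
by rewrite !big_ord_recl big_ord0 addn0 addnA; congr (F _ + F _ + F _)%N; apply: val_inj.
Qed.

Definition rot3 : {perm 'I_3} := perm (@ordS_inj 3).

Lemma rot3E : [/\ rot3 o0 = o1, rot3 o1 = o2 & rot3 o2 = o0].
Proof. by split; apply: val_inj; rewrite permE. Qed.

Definition layer_cycle (s : {perm 'I_3}) := forall i j, [\/ i = j, j = s i | i = s j].

Lemma layer_cycle_rot3 : layer_cycle rot3.
Proof.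
have [r0 r1 r2] := rot3E.
move=> i j; case: (ord3P i) => ->; case: (ord3P j) => ->; rewrite ?r0 ?r1 ?r2;
  by [constructor 1 | constructor 2 | constructor 3].
Qed.

Lemma layer_cycleV s : layer_cycle s -> layer_cycle s^-1.
Proof.
move=> s_cycle i j; case: (s_cycle i j) => [-> | -> | ->]; rewrite ?permK;
  by [constructor 1 | constructor 3 | constructor 2].
Qed.

Variables (gT : finGroupType) (T : 'I_3 -> 'I_3 -> {set gT}).
Hypotheses (card_gT : #|gT| = 2) (T_partite : mpartite T)
  (T_regular : dig_regular (mcay_arc T) 3).

Lemma mcay3_cycle_sizes : exists2 s, layer_cycle s &
  forall i, #|T i (s i)| = 1%N /\ #|T (s i) i| = 2.
Proof.
have row i : (#|T i o0| + #|T i o1| + #|T i o2| = 3)%N.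
  by rewrite -(big_ord3 (fun j => #|T i j|)) -(card_mcay_out T 1); case: (T_regular (1, i)).
have col j : (#|T o0 j| + #|T o1 j| + #|T o2 j| = 3)%N.
  by rewrite -(big_ord3 (fun i => #|T i j|)) -(card_mcay_in T 1); case: (T_regular (1, j)).
have le2 i j : #|T i j| <= 2 by rewrite -card_gT max_card.
have diag0 i : #|T i i| = 0%N by rewrite T_partite cards0.
have [r0 r1 r2] := rot3E.
have [rot3_sizes | rot3V_sizes] :
    (#|T o0 o1| = 1 /\ #|T o1 o2| = 1 /\ #|T o2 o0| = 1 /\
     #|T o1 o0| = 2 /\ #|T o2 o1| = 2 /\ #|T o0 o2| = 2)%N \/
    (#|T o0 o1| = 2 /\ #|T o1 o2| = 2 /\ #|T o2 o0| = 2 /\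
     #|T o1 o0| = 1 /\ #|T o2 o1| = 1 /\ #|T o0 o2| = 1)%N.
- move: (row o0) (row o1) (row o2) (col o0) (col o1) (col o2).
  move: (le2 o0 o1) (le2 o1 o2) (le2 o2 o0) (le2 o1 o0) (le2 o2 o1) (le2 o0 o2).
  rewrite !diag0; lia.
- exists rot3 => [|i]; first exact: layer_cycle_rot3.
  by case: (ord3P i) => ->; rewrite ?r0 ?r1 ?r2; lia.
- exists rot3^-1 => [|i]; first exact/layer_cycleV/layer_cycle_rot3.
  rewrite -[i](permKV rot3) permK; set k := rot3^-1 i.
  by case: (ord3P k) => ->; rewrite ?r0 ?r1 ?r2; lia.
Qed.

Lemma mcay3_rotation_aut :
  exists2 p, p \in dig_aut (mcay_arc T) & (p (1, o0)).2 != o0.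
Proof.
have [s s_cycle sizes] := mcay3_cycle_sizes.
have /fin_all_exists [c T_single] i : exists c, T i (s i) = [set c].
  by apply/cards1P; rewrite (proj1 (sizes i)).
have T_full i : T (s i) i = setT.
  by apply/eqP; rewrite eqEcard subsetT cardsT card_gT (proj2 (sizes i)).
have s_moves i : s i != i.
  by apply/eqP=> si; have := proj1 (sizes i); rewrite si T_partite cards0.
have [p p_aut p_E] : exists2 p, p \in dig_aut (mcay_arc T) &
    forall g i, p (g, i) = (c i * g, s i).
  apply: mcay_layer_perm_aut => i j t.
  case: (s_cycle i j) => [<- | -> | ->].
  - by rewrite !T_partite !inE.
  - rewrite !T_single !inE -mulgA -{2}[c (s i)]mulg1 (inj_eq (mulgI _)).
    by rewrite eq_mulgV1.
  - by rewrite !T_full !inE.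
by exists p; rewrite // p_E; apply: s_moves.
Qed.

Lemma mcay3_order2_not_PDR : ~ dig_aut (mcay_arc T) \isog [set: gT].
Proof.
move=> /card_isog; rewrite cardsT card_gT => card_aut.
have [p p_aut p_moves] := mcay3_rotation_aut.
by have := card_mcay_aut_gt p_aut p_moves; rewrite card_aut card_gT.
Qed.

End TwoElementsThreeLayers.

Lemma order2_no_3PDR (gT : finGroupType) : #|gT| = 2 -> ~ admits_mPDR gT 3 3.
Proof. by move=> card_gT [T [T_partite T_regular]]; apply: mcay3_order2_not_PDR. Qed.

Section DiscreteLog.
Local Open Scope group_scope.
Variables (gT : finGroupType) (x : gT).

Definition dlog (g : gT) : nat := odflt 0 (omap val [pick k : 'I_#[x] | x ^+ k == g]).

Lemma dlog_lt g : dlog g < #[x].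
Proof. by rewrite /dlog; case: pickP => [k _ | _] //=; rewrite order_gt0. Qed.

Lemma dlogK g : g \in <[x]> -> x ^+ dlog g = g.
Proof.
move=> /cycleP[i ->]; rewrite /dlog; case: pickP => [k /eqP // | no_k] /=.
by have := no_k (Ordinal (ltn_pmod i (order_gt0 x))); rewrite /= expg_mod_order eqxx.
Qed.

Lemma dlog_expg k : k < #[x] -> dlog (x ^+ k) = k.
Proof.
move=> lt_k; apply/eqP; have /eqP := dlogK (mem_cycle x k).
by rewrite eq_expg_mod_order !modn_small ?dlog_lt.
Qed.

Lemma dlog_eq0 g : g \in <[x]> -> (dlog g == 0) = (g == 1).
Proof.
move=> g_x; apply/eqP/eqP => [dlog0 | ->]; last by rewrite -(expg0 x) dlog_expg.
by rewrite -(dlogK g_x) dlog0.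
Qed.

Lemma dlog1 : dlog 1 = 0.
Proof. by apply/eqP; rewrite dlog_eq0 ?group1. Qed.

Lemma dlogV g : g \in <[x]> -> dlog g^-1 = (#[x] - dlog g) %% #[x].
Proof.
move=> g_x; rewrite -[RHS]dlog_expg ?ltn_pmod ?order_gt0 // expg_mod_order.
congr dlog; apply: (mulgI g); rewrite mulgV -{1}(dlogK g_x) -expgD.
by rewrite subnKC ?expg_order // ltnW ?dlog_lt.
Qed.

End DiscreteLog.

Lemma card_ord_pairs (m n : nat) (P : nat -> nat -> bool) (s : seq (nat * nat)) :
    uniq s -> all (fun e => (e.1 < m) && (e.2 < n)) s ->
    (forall j k, j < m -> k < n -> P j k = ((j, k) \in s)) ->
  #|[set q : 'I_m * 'I_n | P q.1 q.2]| = size s.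
Proof.
move=> s_uniq /allP s_range P_s; pose f (q : 'I_m * 'I_n) := (val q.1, val q.2).
have f_inj : injective f by move=> [a b] [c d] [/val_inj -> /val_inj ->].
rewrite cardE -(size_map f); apply/perm_size/uniq_perm; rewrite ?map_inj_uniq ?enum_uniq //.
move=> e; apply/mapP/idP => [[[j k]] | e_s].
  by rewrite mem_enum inE /= P_s // => + ->.
case: e e_s => a b ab_s; have /andP[/= lt_a lt_b] := s_range _ ab_s.
by exists (Ordinal lt_a, Ordinal lt_b); rewrite ?mem_enum ?inE /= ?P_s.
Qed.

Definition pdr_exp (m i j k : nat) : bool :=
  match k with
  | 0 => [|| j == i.+1, i == j.+1 | (i == 0) && ((j == 2) || (j == m.-1))]
  | 1 => [|| (1 < i < m.-1) && (j == i.+1), (i == 1) && (j == 0),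
             (i == m.-1) && (j < 2) | [&& i == 0, j == m.-1 & m == 3]]
  | _ => false
  end.

Lemma pdr_exp_le1 m i j k : pdr_exp m i j k -> k <= 1.
Proof. by case: k => [|[|]]. Qed.

Lemma pdr_exp_diag m i k : 2 < m -> pdr_exp m i i k = false.
Proof. by case: k => [|[|k]] /=; lia. Qed.

Lemma pdr_exp_digon m n i j k :
    2 < m -> 1 < n -> (m == 3) ==> (2 < n) -> i < m -> j < m -> k < n ->
  pdr_exp m i j k && pdr_exp m j i ((n - k) %% n) =
    (k == 0) && ((j == i.+1) || (i == j.+1)).
Proof.
move=> m_ge3 n_ge2 n_ge3 lt_i lt_j; case: k => [|[|k]] lt_k.
- by rewrite subn0 modnn /=; lia.
- rewrite modn_small; last lia.
  by case: n n_ge2 n_ge3 lt_k => [|[|[|n']]] //= _; lia.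
- by rewrite andFb; lia.
Qed.

Ltac count_pdr_exps P s :=
  apply: (card_ord_pairs (P := P) (s := s)) => /= [||a [|[|b]] lt_a lt_b];
  rewrite ?inE ?xpair_eqE /=; lia.

Lemma card_pdr_out m n i : 2 < m -> 1 < n -> i < m ->
  #|[set q : 'I_m * 'I_n | pdr_exp m i q.1 q.2]| = 3.
Proof.
move=> m_ge3 n_ge2 lt_i; have [i0 | i_gt0] := posnP i.
  by count_pdr_exps (pdr_exp m i) [:: (1, 0); (2, 0); (m.-1, nat_of_bool (m == 3))].
have [i1 | i_neq1] := eqVneq i 1.
  by count_pdr_exps (pdr_exp m i) [:: (0, 0); (0, 1); (2, 0)].
have [i_last | i_neq_last] := eqVneq i m.-1.
  by count_pdr_exps (pdr_exp m i) [:: (m.-2, 0); (1, 1); (0, 1)].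
by count_pdr_exps (pdr_exp m i) [:: (i.-1, 0); (i.+1, 0); (i.+1, 1)].
Qed.

Lemma card_pdr_in m n j : 2 < m -> 1 < n -> j < m ->
  #|[set q : 'I_m * 'I_n | pdr_exp m q.1 j q.2]| = 3.
Proof.
move=> m_ge3 n_ge2 lt_j; have [j0 | j_gt0] := posnP j.
  by count_pdr_exps (fun i => pdr_exp m i j) [:: (1, 0); (1, 1); (m.-1, 1)].
have [j1 | j_neq1] := eqVneq j 1.
  by count_pdr_exps (fun i => pdr_exp m i j) [:: (0, 0); (2, 0); (m.-1, 1)].
have [m3 | m_gt3] := eqVneq m 3.
  by count_pdr_exps (fun i => pdr_exp m i j) [:: (1, 0); (0, 0); (0, 1)].
have [j2 | j_neq2] := eqVneq j 2.
  by count_pdr_exps (fun i => pdr_exp m i j) [:: (1, 0); (3, 0); (0, 0)].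
have [j_last | j_neq_last] := eqVneq j m.-1.
  by count_pdr_exps (fun i => pdr_exp m i j) [:: (m.-2, 0); (m.-2, 1); (0, 0)].
by count_pdr_exps (fun i => pdr_exp m i j) [:: (j.-1, 0); (j.-1, 1); (j.+1, 0)].
Qed.

Section Construction.
Local Open Scope group_scope.
Variables (gT : finGroupType) (x : gT) (l : nat).
Local Notation m := l.+3.
Hypotheses (x_gen : <[x]> = [set: gT]) (x_gt1 : 1 < #[x])
  (x_gt2 : (m == 3) ==> (2 < #[x])).

Let in_x g : g \in <[x]>. Proof. by rewrite x_gen inE. Qed.

Definition pdr_set (i j : 'I_m) : {set gT} := [set t | pdr_exp m i j (dlog x t)].
Local Notation arc := (mcay_arc pdr_set).

Lemma pdr_arcE g h i j : arc (g, i) (h, j) = pdr_exp m i j (dlog x (h * g^-1)).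
Proof. by rewrite /mcay_arc inE. Qed.

Lemma pdr_partite : mpartite pdr_set.
Proof. by move=> i; apply/setP=> t; rewrite !inE pdr_exp_diag. Qed.

Lemma card_pdr_set i j : #|pdr_set i j| = #|[set k : 'I_#[x] | pdr_exp m i j k]|.
Proof.
have exp_inj : injective (fun k : 'I_#[x] => x ^+ k).
  by move=> a b /(congr1 (dlog x)); rewrite !dlog_expg // => /val_inj.
rewrite -(card_imset _ exp_inj); apply: eq_card => t; rewrite !inE.
apply/idP/imsetP => [t_ij | [k + ->]]; last by rewrite inE dlog_expg.
by exists (Ordinal (dlog_lt x t)); rewrite ?inE ?dlogK.
Qed.

Lemma pdr_regular : dig_regular arc 3.
Proof.
move=> [g i]; rewrite card_mcay_out card_mcay_in; split.
  rewrite (eq_bigr _ (fun j _ => card_pdr_set i j)) -card_dep_pairs.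
  rewrite -(card_pdr_out (n := #[x]) _ x_gt1 (ltn_ord i)) //.
  by apply: eq_card => q; rewrite !inE.
rewrite (eq_bigr _ (fun j _ => card_pdr_set j i)).
rewrite -(card_dep_pairs (fun j : 'I_m => [set k : 'I_#[x] | pdr_exp m j i k])).
rewrite -(card_pdr_in (n := #[x]) _ x_gt1 (ltn_ord i)) //.
by apply: eq_card => q; rewrite !inE.
Qed.

Lemma pdr_digonE g h (i j : 'I_m) :
  digon arc (g, i) (h, j) = (h == g) && ((j == i.+1 :> nat) || (i == j.+1 :> nat)).
Proof.
rewrite /digon !pdr_arcE -[g * h^-1]invgK invMg invgK dlogV //.
by rewrite pdr_exp_digon ?dlog_lt // dlog_eq0 // -eq_mulgV1.
Qed.

Lemma pdr_leaf_layer g i : digon_leaf arc (g, i) -> i = ord0 \/ i = ord_max.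
Proof.
move=> leaf_gi.
suff : (i == 0 :> nat) || (i == m.-1 :> nat).
  by case/orP=> /eqP i_E; [left | right]; apply: val_inj.
apply/negPn/negP; rewrite negb_or => /andP[i_gt0 i_lt_max]; have lt_i := ltn_ord i.
have := leaf_gi (g, inord i.-1) (g, inord i.+1); rewrite !pdr_digonE !inordK ?eqxx /=; try lia.
have -> : (i == i.-1.+1 :> nat) by lia.
by rewrite orbT => /(_ isT isT) [/(congr1 val)]; rewrite /= !inordK; lia.
Qed.

Lemma pdr_leaf0 g : digon_leaf arc (g, ord0).
Proof.
move=> [h1 j1] [h2 j2]; rewrite !pdr_digonE /= => /andP[/eqP -> j1E] /andP[/eqP -> j2E].
by congr pair; apply: val_inj => /=; lia.
Qed.

Lemma pdr_chord0 g : digon_chord arc (g, ord0).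
Proof.
exists (g, inord 1), (g, inord 2).
by rewrite !pdr_digonE pdr_arcE mulgV dlog1 xpair_eqE -val_eqE /= !inordK ?eqxx.
Qed.

Lemma pdr_no_chord_max g : ~ digon_chord arc (g, ord_max).
Proof.
move=> [[h1 j1] [[h2 j2] []]]; rewrite !pdr_digonE /= => /andP[/eqP -> j1E] /andP[/eqP -> j2E].
rewrite xpair_eqE -val_eqE pdr_arcE mulgV dlog1 /=.
by move: (ltn_ord j1) (ltn_ord j2); lia.
Qed.

Lemma pdr_aut_layer0 p g : p \in dig_aut arc -> (p (g, ord0)).2 = ord0.
Proof.
move=> p_aut; have := dig_aut_chord p_aut (@pdr_chord0 g).
have := dig_aut_leaf p_aut (@pdr_leaf0 g).
by case: (p (g, ord0)) => h i /pdr_leaf_layer [-> | ->] // /pdr_no_chord_max.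
Qed.

Definition layer0_map (p : {perm gT * 'I_m}) g := (p (g, ord0)).1.

Lemma pdr_aut_layer p g i : p \in dig_aut arc -> p (g, i) = (layer0_map p g, i).
Proof.
move=> p_aut.
suff layer_k k : k < m -> forall k', k' <= k -> p (g, inord k') = (layer0_map p g, inord k').
  by rewrite -(inord_val i) (layer_k i).
elim: k => [_ k' | k IHk lt_k k'].
  rewrite leqn0 => /eqP ->.
  have -> : inord 0 = ord0 :> 'I_m by apply: val_inj; rewrite /= inordK.
  by rewrite [LHS]surjective_pairing pdr_aut_layer0.
rewrite leq_eqVlt ltnS => /predU1P[-> | ]; last exact: IHk (ltnW lt_k) k'.
have := dig_aut_digon p_aut (g, inord k) (g, inord k.+1).
case p_k1: (p (g, inord k.+1)) => [h j]; rewrite IHk ?(ltnW lt_k) // !pdr_digonE /=.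
rewrite !inordK ?eqxx //=; try lia.
move=> /andP[/eqP h_E]; subst h => /orP[/eqP j_E | /eqP k_E].
  by congr pair; apply: val_inj; rewrite /= inordK.
have : p (g, inord k.+1) = p (g, inord j) by rewrite p_k1 IHk ?inord_val //; lia.
by move/perm_inj => [/(congr1 val)] /=; rewrite !inordK //; lia.
Qed.

Lemma pdr_aut_shift p g : p \in dig_aut arc ->
  layer0_map p (x * g) = x * layer0_map p g.
Proof.
move=> p_aut; set f := layer0_map p.
have : arc (g, ord_max) (x * g, inord 1).
  by rewrite pdr_arcE mulgK -[X in dlog _ X]expg1 dlog_expg // inordK //= eqxx orbT.
rewrite -(dig_autP p_aut) !(pdr_aut_layer _ _ p_aut) pdr_arcE.
move=> /pdr_exp_le1; rewrite leq_eqVlt ltnS leqn0 => /orP[] /eqP dlog_E.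
  have := dlogK (in_x (f (x * g) * (f g)^-1)); rewrite dlog_E expg1 => x_E.
  by rewrite -[LHS](mulgKV (f g)) -x_E.
have : p (x * g, ord0) = p (g, ord0).
  rewrite !(pdr_aut_layer _ ord0 p_aut); congr pair; apply/eqP.
  by rewrite eq_mulgV1 -(dlog_eq0 (in_x _)) dlog_E.
by move/perm_inj => [/(canRL (mulgK g))]; rewrite mulgV => x1; move: x_gt1; rewrite x1 order1.
Qed.

Lemma pdr_aut_rtransl p : p \in dig_aut arc -> p = rtransl (layer0_map p 1).
Proof.
move=> p_aut; have f_expg k : layer0_map p (x ^+ k) = x ^+ k * layer0_map p 1.
  elim: k => [|k IHk]; first by rewrite expg0 mul1g.
  by rewrite expgS pdr_aut_shift // IHk mulgA.
apply/permP => -[g i]; rewrite rtranslE (pdr_aut_layer _ _ p_aut).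
by rewrite -[in LHS](dlogK (in_x g)) f_expg dlogK.
Qed.

Lemma pdr_admits : admits_mPDR gT m 3.
Proof.
exists pdr_set; split; [exact: pdr_partite | exact: pdr_regular |].
by apply: mcay_aut_isog => // p /pdr_aut_rtransl ->; eexists.
Qed.

End Construction.

Theorem lemma3p3 (gT : finGroupType) (m : nat) :
  cyclic [set: gT] -> 2 <= #|[set: gT]| -> 3 <= m ->
  (admits_mPDR gT m 3 <-> ~ (#|[set: gT]| = 2 /\ m = 3)).
Proof.
move=> cyc_gT gT_ge2 m_ge3; split.
  by move=> PDR [gT2 m3]; subst m; apply: order2_no_3PDR PDR; rewrite -cardsT.
move=> not_2_3; have [x x_gen] := cyclicP cyc_gT.
have [l m_E] : exists l, m = l.+3 by exists (m - 3); lia.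
have ox : #[x]%g = #|[set: gT]| by rewrite x_gen.
subst m; apply: (pdr_admits (esym x_gen)); rewrite ox //.
by apply/implyP => /eqP l3; lia.
Qed.
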